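(* Let $f\in C([0,1],\mathbb R)\cap C^2([0,1),\mathbb R)$, $R\in C([0,1],\mathbb R)\cap C^1([0,1),\mathbb R)$ and $\epsilon>0$, and assume that for all $w\in[0,1)$ $$f'(w)=(1-w)^{\epsilon-1}R(w),\qquad R'(w)>0.$$ Then $$\lim_{w\to1^-}\frac{f(1)-f(w)}{(1-w)^\epsilon}=\frac{R(1)}{\epsilon},\qquad \frac{d}{dw}\,\frac{f(1)-f(w)}{(1-w)^\epsilon}>0\quad\text{for all }w\in[0,1),$$ and consequently $$f(1)-f(0)<\frac{f(1)-f(w)}{(1-w)^\epsilon}<\frac{R(1)}{\epsilon}\qquad\text{for all }w\in(0,1).$$ *)

From Stdlib Require Import Reals.
From Coquelicot Require Import Coquelicot.
Open Scope R_scope.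

Definition I01c (x : R) : Prop := 0 <= x <= 1.
Definition I01o (x : R) : Prop := 0 <= x < 1.

Definition cont_on (D : R -> Prop) (f : R -> R) : Prop :=
  forall x, D x -> filterlim f (within D (locally x)) (locally (f x)).

Definition is_derive_on (D : R -> Prop) (f : R -> R) (x l : R) : Prop :=
  filterlim (fun y => (f y - f x) / (y - x))
    (within (fun y => D y /\ y <> x) (locally x)) (locally l).

Definition C1_on (D : R -> Prop) (f f1 : R -> R) : Prop :=
  (forall x, D x -> is_derive_on D f x (f1 x)) /\ cont_on D f1.

Definition C2_on (D : R -> Prop) (f f1 f2 : R -> R) : Prop :=
  (forall x, D x -> is_derive_on D f x (f1 x)) /\
  (forall x, D x -> is_derive_on D f1 x (f2 x)) /\ cont_on D f2.

(* Let P(w) = (1-w)^eps and q = tail_ratio f eps = (f(1) - f) / P, and consider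
     upper_gap = f(1) - f - (R(1)/eps) P   and   lower_gap = P R - eps (f(1) - f).
   Their derivatives (1-w)^(eps-1) (R(1) - R(w)) and P R' are positive on [0,1)
   (R increases), and both functions tend to 0 at 1-, so both are negative on [0,1).
   Now upper_gap < 0 says q < R(1)/eps and lower_gap < 0 says q > R(w)/eps, which
   squeezes the limit; and q' = -(1-w)^(eps-1) lower_gap / P^2 > 0, so q increases
   from its value f(1) - f(0) at 0. *)

From Stdlib Require Import Reals Lra Psatz.
From Coquelicot Require Import Coquelicot.
Open Scope R_scope.

Section RealFilterlim.
Context {T : Type} {F : (T -> Prop) -> Prop} {FF : Filter F}.

Lemma filterlim_Rplus (u v : T -> R) a b :
  filterlim u F (locally a) -> filterlim v F (locally b) ->
  filterlim (fun t => u t + v t) F (locally (a + b)).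
Proof.
  intros Hu Hv; eapply filterlim_comp_2; [exact Hu | exact Hv | apply (filterlim_plus a b)].
Qed.

Lemma filterlim_Ropp (u : T -> R) a :
  filterlim u F (locally a) -> filterlim (fun t => - u t) F (locally (- a)).
Proof. intros Hu; eapply filterlim_comp; [exact Hu | apply (filterlim_opp a)]. Qed.

Lemma filterlim_Rminus (u v : T -> R) a b :
  filterlim u F (locally a) -> filterlim v F (locally b) ->
  filterlim (fun t => u t - v t) F (locally (a - b)).
Proof. intros Hu Hv; apply filterlim_Rplus; [exact Hu | exact (filterlim_Ropp _ _ Hv)]. Qed.

Lemma filterlim_Rmult (u v : T -> R) a b :
  filterlim u F (locally a) -> filterlim v F (locally b) ->
  filterlim (fun t => u t * v t) F (locally (a * b)).
Proof.
  intros Hu Hv; eapply filterlim_comp_2; [exact Hu | exact Hv | apply (filterlim_mult a b)].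
Qed.

Lemma filterlim_Rinv (u : T -> R) a : a <> 0 ->
  filterlim u F (locally a) -> filterlim (fun t => / u t) F (locally (/ a)).
Proof.
  intros Ha Hu; eapply filterlim_comp; [exact Hu |].
  apply (filterlim_Rbar_inv (Finite a)); congruence.
Qed.

Lemma filterlim_eventually_neq_0 (u : T -> R) a : a <> 0 ->
  filterlim u F (locally a) -> F (fun t => u t <> 0).
Proof.
  intros Ha Hu.
  assert (Hb := proj1 (filterlim_locally _ _) Hu (mkposreal _ (Rabs_pos_lt _ Ha))).
  refine (filter_imp _ _ _ Hb); intros t Ht Hut; change (Rabs (u t - a) < Rabs a) in Ht.
  rewrite Hut, Rminus_0_l, Rabs_Ropp in Ht; lra.
Qed.

End RealFilterlim.

Lemma filterlim_le_const {F} {FF : ProperFilter' F} (u : R -> R) l c :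
  F (fun t => u t <= c) -> filterlim u F (locally l) -> l <= c.
Proof.
  intros Hle Hu.
  exact (filterlim_le (F := F) u (fun _ => c) l c Hle Hu (filterlim_const c)).
Qed.

Lemma filterlim_ge_const {F} {FF : ProperFilter' F} (u : R -> R) l c :
  F (fun t => c <= u t) -> filterlim u F (locally l) -> c <= l.
Proof.
  intros Hge Hu.
  exact (filterlim_le (F := F) (fun _ => c) u c l Hge (filterlim_const c) Hu).
Qed.

Lemma at_left_le_within_cc a b : a < b ->
  filter_le (at_left b) (within (fun y => a <= y <= b) (locally b)).
Proof.
  intros Hab P [d Hd].
  exists (mkposreal _ (Rmin_pos _ _ (cond_pos d) (proj2 (Rlt_0_minus _ _) Hab))).
  intros y Hy Hyb; change (Rabs (y - b) < Rmin d (b - a)) in Hy.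
  assert (Hmin := Rmin_l d (b - a)); assert (Hmin' := Rmin_r d (b - a)).
  apply Rabs_def2 in Hy; apply Hd; [change (Rabs (y - b) < d); apply Rabs_def1 |]; lra.
Qed.

Lemma at_right_le_within_co a b : a < b ->
  filter_le (at_right a) (within (fun y => (a <= y < b) /\ y <> a) (locally a)).
Proof.
  intros Hab P [d Hd].
  exists (mkposreal _ (Rmin_pos _ _ (cond_pos d) (proj2 (Rlt_0_minus _ _) Hab))).
  intros y Hy Hay; change (Rabs (y - a) < Rmin d (b - a)) in Hy.
  assert (Hmin := Rmin_l d (b - a)); assert (Hmin' := Rmin_r d (b - a)).
  apply Rabs_def2 in Hy; apply Hd; [change (Rabs (y - a) < d); apply Rabs_def1 |]; lra.
Qed.

Section DeriveOn.
Variable D : R -> Prop.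
Local Notation punctured x := (within (fun y => D y /\ y <> x) (locally x)).

Lemma is_derive_on_of_is_derive h x l : is_derive h x l -> is_derive_on D h x l.
Proof.
  intros Hd; apply is_derive_Reals in Hd.
  apply filterlim_locally; intros e.
  destruct (Hd e (cond_pos e)) as [d Hdd]; exists d.
  intros y Hy [_ Hyx]; change (Rabs (y - x) < d) in Hy.
  change (Rabs ((h y - h x) / (y - x) - l) < e).
  replace y with (x + (y - x)) at 1 by ring.
  apply Hdd; [lra | exact Hy].
Qed.

Lemma is_derive_of_is_derive_on h x l :
  locally x D -> is_derive_on D h x l -> is_derive h x l.
Proof.
  intros [d HD] Hd; apply is_derive_Reals; intros e He.
  destruct (proj1 (filterlim_locally _ _) Hd (mkposreal e He)) as [d' Hdd].
  exists (mkposreal _ (Rmin_pos _ _ (cond_pos d) (cond_pos d'))); simpl.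
  intros k Hk0 Hk.
  assert (Hmin := Rmin_l d d'); assert (Hmin' := Rmin_r d d').
  assert (Hball : forall r : posreal, Rmin d d' <= r -> ball x r (x + k))
    by (intros r Hr; change (Rabs (x + k - x) < r); replace (x + k - x) with k by ring; lra).
  assert (Hxk : x + k <> x) by (intro E; apply Hk0; lra).
  specialize (Hdd (x + k) (Hball d' Hmin') (conj (HD _ (Hball d Hmin)) Hxk)).
  replace (x + k - x) with k in Hdd by ring; exact Hdd.
Qed.

Lemma is_derive_on_continuous h x l :
  is_derive_on D h x l -> filterlim h (punctured x) (locally (h x)).
Proof.
  intros Hd.
  apply (filterlim_ext_loc (fun y => h x + (y - x) * ((h y - h x) / (y - x)))).
  - unfold within; apply filter_forall; intros y [_ Hyx]; field; lra.
  - assert (Hshift : filterlim (fun y => y - x) (punctured x) (locally (x - x))).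
    { apply filterlim_Rminus; [| apply filterlim_const].
      eapply filterlim_filter_le_1; [apply filter_le_within | apply filterlim_id]. }
    assert (Hlim := filterlim_Rplus _ _ _ _ (filterlim_const (F := punctured x) (h x))
                                      (filterlim_Rmult _ _ _ _ Hshift Hd)).
    now rewrite Rminus_diag, Rmult_0_l, Rplus_0_r in Hlim.
Qed.

Lemma is_derive_on_minus u v x du dv :
  is_derive_on D u x du -> is_derive_on D v x dv ->
  is_derive_on D (fun y => u y - v y) x (du - dv).
Proof.
  intros Hu Hv.
  apply (filterlim_ext_loc (fun y => (u y - u x) / (y - x) - (v y - v x) / (y - x))).
  - unfold within; apply filter_forall; intros y [_ Hyx]; field; lra.
  - exact (filterlim_Rminus _ _ _ _ Hu Hv).
Qed.

Lemma is_derive_on_mult u v x du dv :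
  is_derive_on D u x du -> is_derive_on D v x dv ->
  is_derive_on D (fun y => u y * v y) x (du * v x + u x * dv).
Proof.
  intros Hu Hv.
  apply (filterlim_ext_loc
    (fun y => (u y - u x) / (y - x) * v y + u x * ((v y - v x) / (y - x)))).
  - unfold within; apply filter_forall; intros y [_ Hyx]; field; lra.
  - apply filterlim_Rplus; apply filterlim_Rmult; try assumption.
    + exact (is_derive_on_continuous _ _ _ Hv).
    + apply filterlim_const.
Qed.

Lemma is_derive_on_div u v x du dv : v x <> 0 ->
  is_derive_on D u x du -> is_derive_on D v x dv ->
  is_derive_on D (fun y => u y / v y) x ((du * v x - u x * dv) / (v x * v x)).
Proof.
  intros Hvx Hu Hv.
  assert (Hvc := is_derive_on_continuous _ _ _ Hv).
  apply (filterlim_ext_loc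
    (fun y => ((u y - u x) / (y - x) * v x - u x * ((v y - v x) / (y - x))) * / (v y * v x))).
  - assert (Hne := filterlim_eventually_neq_0 _ _ Hvx Hvc); unfold within in Hne |- *.
    refine (filter_imp _ _ _ Hne); intros y Hvy [Dy Hyx].
    specialize (Hvy (conj Dy Hyx)); field; repeat split; try assumption; lra.
  - apply filterlim_Rmult.
    + apply filterlim_Rminus; apply filterlim_Rmult; try assumption; apply filterlim_const.
    + apply filterlim_Rinv; [now apply Rmult_integral_contrapositive |].
      apply filterlim_Rmult; [exact Hvc | apply filterlim_const].
Qed.

Lemma is_derive_on_const c x : is_derive_on D (fun _ => c) x 0.
Proof. apply is_derive_on_of_is_derive; exact (is_derive_const c x). Qed.

End DeriveOn.

Lemma incr_of_derive_on_pos a b (h dh : R -> R) :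
  (forall x, a <= x < b -> is_derive_on (fun y => a <= y < b) h x (dh x)) ->
  (forall x, a <= x < b -> 0 < dh x) ->
  forall x y, a <= x < y -> y < b -> h x < h y.
Proof.
  intros Hd Hpos.
  assert (Hder : forall x, a < x < b -> is_derive h x (dh x)).
  { intros x Hx; apply is_derive_of_is_derive_on with (fun y => a <= y < b); [| apply Hd; lra].
    apply (filter_imp (fun y => a < y < b)); [intros y Hy; lra |].
    exact (open_and _ _ (open_gt a) (open_lt b) x Hx). }
  assert (Hinner : forall x y, a < x < y -> y < b -> h x < h y).
  { intros x y Hxy Hy.
    destruct (MVT_gen h x y dh) as [c [Hc Hmvt]]; rewrite Rmin_left, Rmax_right in * by lra.
    - intros z Hz; apply Hder; lra.
    - intros z Hz; apply continuity_pt_filterlim, (ex_derive_continuous h).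
      exists (dh z); apply Hder; lra.
    - assert (0 < dh c * (y - x)) by (apply Rmult_lt_0_compat; [apply Hpos |]; lra).
      lra. }
  intros x y Hxy Hy; destruct (Req_dec x a) as [-> | Hxa]; [| apply Hinner; lra].
  set (m := (a + y) / 2).
  assert (Ha : h a <= h m).
  { apply (filterlim_le_const (F := at_right a) h).
    2: { apply (filterlim_filter_le_1 _ (at_right_le_within_co a b ltac:(lra))).
         eapply is_derive_on_continuous, Hd; lra. }
    assert (Hpos_m : 0 < m - a) by (unfold m; lra).
    exists (mkposreal _ Hpos_m); intros z Hz Haz; change (Rabs (z - a) < m - a) in Hz.
    apply Rabs_def2 in Hz; apply Rlt_le, Hinner; unfold m in *; lra. }
  assert (h m < h y) by (apply Hinner; unfold m; lra).
  lra.
Qed.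

Lemma incr_lt_at_left_lim a b (h : R -> R) L :
  (forall x y, a <= x < y -> y < b -> h x < h y) ->
  filterlim h (at_left b) (locally L) -> forall x, a <= x < b -> h x < L.
Proof.
  intros Hincr Hlim x Hx.
  set (m := (x + b) / 2).
  assert (h m <= L).
  { apply (filterlim_ge_const (F := at_left b) h); [| exact Hlim].
    assert (Hpos_m : 0 < b - m) by (unfold m; lra).
    exists (mkposreal _ Hpos_m); intros z Hz Hzb; change (Rabs (z - b) < b - m) in Hz.
    apply Rabs_def2 in Hz; apply Rlt_le, Hincr; unfold m in *; lra. }
  assert (h x < h m) by (apply Hincr; unfold m; lra).
  lra.
Qed.

Lemma Rpower_gt_0 x e : 0 < Rpower x e.
Proof. apply exp_pos. Qed.

Lemma Rpower_1_l e : Rpower 1 e = 1.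
Proof. unfold Rpower; rewrite ln_1, Rmult_0_r; apply exp_0. Qed.

Lemma is_derive_Rpower_1_minus e x : x < 1 ->
  is_derive (fun w => Rpower (1 - w) e) x (- e * Rpower (1 - x) (e - 1)).
Proof.
  intros Hx.
  assert (Hpow := proj2 (is_derive_Reals _ _ _) (derivable_pt_lim_power (1 - x) e ltac:(lra))).
  assert (Hlin : is_derive (fun w => 1 - w) x (-1)) by (auto_derive; [exact I | ring]).
  replace (- e * Rpower (1 - x) (e - 1)) with (scal (-1) (e * Rpower (1 - x) (e - 1)))
    by (unfold scal; simpl; unfold mult; simpl; ring).
  exact (is_derive_comp _ _ x _ _ Hpow Hlin).
Qed.

Lemma Rpower_1_minus_at_left e : 0 < e ->
  filterlim (fun w => Rpower (1 - w) e) (at_left 1) (locally 0).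
Proof.
  intros He; apply filterlim_locally; intros r.
  exists (mkposreal _ (Rpower_gt_0 r (/ e))); intros y Hy Hy1.
  change (Rabs (y - 1) < Rpower r (/ e)) in Hy; change (Rabs (Rpower (1 - y) e - 0) < r).
  apply Rabs_def2 in Hy.
  rewrite Rminus_0_r, Rabs_pos_eq by apply Rlt_le, Rpower_gt_0.
  replace (pos r) with (Rpower (Rpower r (/ e)) e)
    by (rewrite Rpower_mult, Rinv_l, Rpower_1; [reflexivity | apply cond_pos | lra]).
  apply Rlt_Rpower_l; lra.
Qed.

Lemma cont_on_I01c_at_left_1 g : cont_on I01c g -> filterlim g (at_left 1) (locally (g 1)).
Proof.
  intros Hg; apply (filterlim_filter_le_1 _ (at_left_le_within_cc 0 1 Rlt_0_1)).
  apply Hg; unfold I01c; lra.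
Qed.

Definition tail_ratio (f : R -> R) (eps w : R) : R := (f 1 - f w) / Rpower (1 - w) eps.

Lemma tail_ratio_0 f eps : tail_ratio f eps 0 = f 1 - f 0.
Proof. unfold tail_ratio; rewrite Rminus_0_r, Rpower_1_l; field. Qed.

Section TailRatio.
Variables (f R0 R1 : R -> R) (eps : R).
Hypothesis eps_gt0 : 0 < eps.
Hypothesis f_cont : cont_on I01c f.
Hypothesis R0_cont : cont_on I01c R0.
Hypothesis f_deriv :
  forall w, I01o w -> is_derive_on I01o f w (Rpower (1 - w) (eps - 1) * R0 w).
Hypothesis R0_deriv : forall w, I01o w -> is_derive_on I01o R0 w (R1 w).
Hypothesis R1_pos : forall w, I01o w -> R1 w > 0.

Let pw w := Rpower (1 - w) eps.
Let pw1 w := Rpower (1 - w) (eps - 1).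

Lemma is_derive_on_pw w : I01o w -> is_derive_on I01o pw w (- eps * pw1 w).
Proof. intros Hw; apply is_derive_on_of_is_derive, is_derive_Rpower_1_minus; destruct Hw; lra. Qed.

Lemma is_derive_on_f1_minus_f w : I01o w ->
  is_derive_on I01o (fun y => f 1 - f y) w (0 - pw1 w * R0 w).
Proof. intros Hw; apply is_derive_on_minus; [apply is_derive_on_const | exact (f_deriv w Hw)]. Qed.

Lemma pw_at_left_1 : filterlim pw (at_left 1) (locally 0).
Proof. exact (Rpower_1_minus_at_left eps eps_gt0). Qed.

Lemma R0_lt_R0_1 w : I01o w -> R0 w < R0 1.
Proof.
  apply (incr_lt_at_left_lim 0 1 R0); [| exact (cont_on_I01c_at_left_1 _ R0_cont)].
  apply (incr_of_derive_on_pos 0 1 R0 R1); [exact R0_deriv | exact R1_pos].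
Qed.

Let upper_gap w := f 1 - f w - R0 1 / eps * pw w.

Lemma upper_gap_neg w : I01o w -> upper_gap w < 0.
Proof.
  apply (incr_lt_at_left_lim 0 1 upper_gap).
  - apply (incr_of_derive_on_pos 0 1 upper_gap (fun x => pw1 x * (R0 1 - R0 x))).
    + intros x Hx.
      replace (pw1 x * (R0 1 - R0 x))
        with (0 - pw1 x * R0 x - (0 * pw x + R0 1 / eps * (- eps * pw1 x))) by (field; lra).
      apply is_derive_on_minus; [exact (is_derive_on_f1_minus_f x Hx) |].
      apply (is_derive_on_mult _ (fun _ => R0 1 / eps) pw);
        auto using is_derive_on_const, is_derive_on_pw.
    + intros x Hx; apply Rmult_lt_0_compat; [apply Rpower_gt_0 |].
      assert (R0 x < R0 1) by now apply R0_lt_R0_1.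
      lra.
  - assert (Hlim : filterlim upper_gap (at_left 1) (locally (f 1 - f 1 - R0 1 / eps * 0))).
    { apply filterlim_Rminus; [apply filterlim_Rminus | apply filterlim_Rmult];
        try apply filterlim_const; auto using cont_on_I01c_at_left_1, pw_at_left_1. }
    now rewrite Rminus_diag, Rmult_0_r, Rminus_0_r in Hlim.
Qed.

Let lower_gap w := pw w * R0 w - eps * (f 1 - f w).

Lemma lower_gap_neg w : I01o w -> lower_gap w < 0.
Proof.
  apply (incr_lt_at_left_lim 0 1 lower_gap).
  - apply (incr_of_derive_on_pos 0 1 lower_gap (fun x => pw x * R1 x)).
    + intros x Hx.
      replace (pw x * R1 x)
        with (- eps * pw1 x * R0 x + pw x * R1 x - (0 * (f 1 - f x) + eps * (0 - pw1 x * R0 x)))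
        by ring.
      apply is_derive_on_minus; [apply (is_derive_on_mult _ pw R0); auto using is_derive_on_pw |].
      apply (is_derive_on_mult _ (fun _ => eps) (fun y => f 1 - f y));
        auto using is_derive_on_const, is_derive_on_f1_minus_f.
    + intros x Hx; apply Rmult_lt_0_compat; [apply Rpower_gt_0 | now apply R1_pos].
  - assert (Hlim : filterlim lower_gap (at_left 1) (locally (0 * R0 1 - eps * (f 1 - f 1)))).
    { apply filterlim_Rminus; apply filterlim_Rmult; try apply filterlim_Rminus;
        try apply filterlim_const; auto using cont_on_I01c_at_left_1, pw_at_left_1. }
    now rewrite Rminus_diag, Rmult_0_l, Rmult_0_r, Rminus_0_r in Hlim.
Qed.

Lemma tail_ratio_lt w : I01o w -> tail_ratio f eps w < R0 1 / eps.
Proof.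
  intros Hw.
  assert (Hdiff : tail_ratio f eps w - R0 1 / eps = upper_gap w / pw w).
  { assert (Hpw : 0 < pw w) by apply Rpower_gt_0.
    unfold tail_ratio, upper_gap, pw in *; field; lra. }
  assert (upper_gap w / pw w < 0)
    by (apply Rdiv_neg_pos; [now apply upper_gap_neg | apply Rpower_gt_0]).
  lra.
Qed.

Lemma tail_ratio_gt w : I01o w -> R0 w / eps < tail_ratio f eps w.
Proof.
  intros Hw.
  assert (Hdiff : tail_ratio f eps w - R0 w / eps = - lower_gap w / (eps * pw w)).
  { assert (Hpw : 0 < pw w) by apply Rpower_gt_0.
    unfold tail_ratio, lower_gap, pw in *; field; lra. }
  assert (0 < - lower_gap w / (eps * pw w)).
  { assert (lower_gap w < 0) by now apply lower_gap_neg.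
    apply Rdiv_lt_0_compat; [lra |].
    apply Rmult_lt_0_compat; [lra | apply Rpower_gt_0]. }
  lra.
Qed.

Let slope w := - pw1 w * lower_gap w / (pw w * pw w).

Lemma is_derive_on_tail_ratio w : I01o w -> is_derive_on I01o (tail_ratio f eps) w (slope w).
Proof.
  intros Hw.
  assert (Hpw : pw w <> 0) by apply Rgt_not_eq, Rpower_gt_0.
  replace (slope w)
    with (((0 - pw1 w * R0 w) * pw w - (f 1 - f w) * (- eps * pw1 w)) / (pw w * pw w))
    by (unfold slope, lower_gap; field; exact Hpw).
  apply (is_derive_on_div _ (fun y => f 1 - f y) pw);
    auto using is_derive_on_f1_minus_f, is_derive_on_pw.
Qed.

Lemma slope_pos w : I01o w -> 0 < slope w.
Proof.
  intros Hw; assert (lower_gap w < 0) by now apply lower_gap_neg.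
  apply Rdiv_lt_0_compat.
  - assert (0 < pw1 w) by apply Rpower_gt_0.
    nra.
  - apply Rmult_lt_0_compat; apply Rpower_gt_0.
Qed.

Lemma tail_ratio_derive_pos w : I01o w ->
  exists d, d > 0 /\ is_derive_on I01o (tail_ratio f eps) w d.
Proof.
  intros Hw; exists (slope w); split; [apply slope_pos | apply is_derive_on_tail_ratio]; exact Hw.
Qed.

Lemma tail_ratio_incr x y : 0 <= x < y -> y < 1 -> tail_ratio f eps x < tail_ratio f eps y.
Proof.
  apply (incr_of_derive_on_pos 0 1 _ slope); [exact is_derive_on_tail_ratio | exact slope_pos].
Qed.

Lemma tail_ratio_at_left_1 : filterlim (tail_ratio f eps) (at_left 1) (locally (R0 1 / eps)).
Proof.
  change (filterlim (tail_ratio f eps) (at_left 1) (Rbar_locally (R0 1 / eps))).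
  apply (filterlim_le_le (fun w => R0 w / eps) _ (fun _ => R0 1 / eps)).
  - exists (mkposreal 1 Rlt_0_1); intros y Hy Hy1; change (Rabs (y - 1) < 1) in Hy.
    apply Rabs_def2 in Hy.
    split; apply Rlt_le; [apply tail_ratio_gt | apply tail_ratio_lt]; unfold I01o; lra.
  - exact (filterlim_Rmult _ _ _ _ (cont_on_I01c_at_left_1 _ R0_cont) (filterlim_const _)).
  - apply filterlim_const.
Qed.

End TailRatio.

Theorem lemma5p1 (f R0 : R -> R) (eps : R) :
  cont_on I01c f ->
  (exists f1 f2, C2_on I01o f f1 f2) ->
  cont_on I01c R0 ->
  forall R1 : R -> R, C1_on I01o R0 R1 ->
  0 < eps ->
  (forall w, I01o w -> is_derive_on I01o f w (Rpower (1 - w) (eps - 1) * R0 w)) ->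
  (forall w, I01o w -> R1 w > 0) ->
  filterlim (fun w => (f 1 - f w) / Rpower (1 - w) eps) (at_left 1)
    (locally (R0 1 / eps)) /\
  (forall w, I01o w -> exists d, d > 0 /\
     is_derive_on I01o (fun v => (f 1 - f v) / Rpower (1 - v) eps) w d) /\
  (forall w, 0 < w < 1 ->
     f 1 - f 0 < (f 1 - f w) / Rpower (1 - w) eps < R0 1 / eps).
Proof.
  intros f_cont _ R0_cont R1 [R0_deriv _] eps_gt0 f_deriv R1_pos.
  split; [| split].
  - exact (tail_ratio_at_left_1 f R0 R1 eps eps_gt0 f_cont R0_cont f_deriv R0_deriv R1_pos).
  - exact (tail_ratio_derive_pos f R0 R1 eps eps_gt0 f_cont R0_cont f_deriv R0_deriv R1_pos).
  - intros w Hw; rewrite <- (tail_ratio_0 f eps); split.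
    + apply (tail_ratio_incr f R0 R1 eps); auto; lra.
    + apply (tail_ratio_lt f R0 R1 eps); auto; unfold I01o; lra.
Qed.
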